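(* Let $\mathbf{P}$ be a finite poset with a metric $d_{\mathbf{P}}$, and let $M,N$ be $\mathbf{P}$-modules. If $d_{\mathrm{GT}}(M,N)=0$, then $M\cong N$. Consequently $d_{\mathrm{GT}}$ is an extended metric on isomorphism classes of $\mathbf{P}$-modules.
   Context: Fix a field $k$; $\mathrm{vect}$ is the category of finite-dimensional $k$-vector spaces. A finite poset is a category with a unique morphism $x\to y$ iff $x\le y$; a $\mathbf{P}$-module is a functor $\mathbf{P}\to\mathrm{vect}$. For a monotone map $g$, $g^*$ denotes precomposition with $g$. A Galois insertion $f:\mathbf{Q}\rightleftarrows\mathbf{P}:g$ consists of monotone maps $f:\mathbf{Q}\to\mathbf{P}$, $g:\mathbf{P}\to\mathbf{Q}$ with $f(u)\le x\iff u\le g(x)$ for all $u,x$, and $f\circ g=\mathrm{id}_{\mathbf{P}}$. A Galois coupling of $(M,N)$ is a tuple $(\mathbf{Q},f\dashv g,h\dashv i,\Gamma)$ with $\mathbf{Q}$ a finite poset, $f:\mathbf{Q}\rightleftarrows\mathbf{P}:g$ and $h:\mathbf{Q}\rightleftarrows\mathbf{P}:i$ Galois insertions, and $\Gamma\in\mathrm{vect}^{\mathbf{Q}}$ with $g^*\Gamma\cong M$ and $i^*\Gamma\cong N$. Its cost is $\sup_{q\in\mathbf{Q}}d_{\mathbf{P}}(f(q),h(q))$. $d_{\mathrm{GT}}(M,N)$ is the infimum of costs of all Galois couplings of $(M,N)$, and $\infty$ if there is none. *)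

From HB Require Import structures.
From mathcomp Require Import all_boot all_order all_algebra.
From mathcomp Require Import classical_sets reals constructive_ereal ereal.
Set Implicit Arguments. Unset Strict Implicit. Unset Printing Implicit Defensive.
Import Order.TTheory GRing.Theory Num.Theory.
Local Open Scope ring_scope.
Local Open Scope order_scope.

Definition is_metric (R : realType) (T : Type) (dist : T -> T -> R) : Prop :=
  [/\ forall x y, 0 <= dist x y,
      forall x y, dist x y = 0 <-> x = y,
      forall x y, dist x y = dist y x &
      forall x y z, dist x z <= dist x y + dist y z].

(* A module over the poset Q: a functor Q -> vect, where each vector space is
   k^(pdim x) (row vectors) and the map for x <= y is the matrix pmap x y acting
   on row vectors by right multiplication.  pmap x y for x not <= y is unused. *)
Record pmod (k : fieldType) (d : Order.disp_t) (Q : porderType d) := PMod {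
  pdim : Q -> nat;
  pmap : forall x y : Q, 'M[k]_(pdim x, pdim y);
  pmap_id : forall x, pmap x x = 1%:M;
  pmap_comp : forall x y z, x <= y -> y <= z -> pmap x z = pmap x y *m pmap y z
}.

Definition diag_iso (k : fieldType) (d : Order.disp_t) (Q : porderType d)
  (dA : Q -> nat) (fA : forall x y, 'M[k]_(dA x, dA y))
  (dB : Q -> nat) (fB : forall x y, 'M[k]_(dB x, dB y)) : Prop :=
  exists (phi : forall x, 'M[k]_(dA x, dB x)) (psi : forall x, 'M[k]_(dB x, dA x)),
    [/\ forall x, phi x *m psi x = 1%:M,
        forall x, psi x *m phi x = 1%:M &
        forall x y, x <= y -> fA x y *m phi y = phi x *m fB x y].

Definition pmod_iso (k : fieldType) (d : Order.disp_t) (Q : porderType d)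
  (M N : pmod k Q) : Prop := diag_iso (@pmap _ _ _ M) (@pmap _ _ _ N).

Definition pullback_iso (k : fieldType) (d dQ : Order.disp_t) (P : porderType d)
  (Q : porderType dQ) (g : P -> Q) (G : pmod k Q) (M : pmod k P) : Prop :=
  @diag_iso k d P (fun x => pdim G (g x)) (fun x y => pmap G (g x) (g y))
            (pdim M) (pmap M).

Definition galois_insertion (d dQ : Order.disp_t) (P : porderType d)
  (Q : porderType dQ) (f : Q -> P) (g : P -> Q) : Prop :=
  [/\ {homo f : u v / u <= v}, {homo g : x y / x <= y},
      forall u x, (f u <= x) <-> (u <= g x) &
      forall x, f (g x) = x].

(* Cost of a coupling: sup_q d(f q, h q); over a finite (possibly empty) Q,
   with the convention that the empty sup of nonnegative reals is 0. *)
Definition coupling_cost (R : realType) (d dQ : Order.disp_t) (P : porderType d)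
  (Q : finPOrderType dQ) (dP : P -> P -> R) (f h : Q -> P) : R :=
  (\big[Num.max/0]_(q : Q) dP (f q) (h q))%R.

Definition coupling_cost_of (R : realType) (k : fieldType) (d : Order.disp_t)
  (P : finPOrderType d) (dP : P -> P -> R) (M N : pmod k P) (c : R) : Prop :=
  exists (dQ : Order.disp_t) (Q : finPOrderType dQ)
         (f : Q -> P) (g : P -> Q) (h : Q -> P) (i : P -> Q) (G : pmod k Q),
    [/\ galois_insertion f g, galois_insertion h i,
        pullback_iso g G M, pullback_iso i G N &
        c = coupling_cost dP f h].

(* d_GT(M,N): infimum of costs (+oo if there is no coupling). *)
Definition dGT (R : realType) (k : fieldType) (d : Order.disp_t)
  (P : finPOrderType d) (dP : P -> P -> R) (M N : pmod k P) : \bar R :=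
  ereal_inf [set (c%:E)%E | c in coupling_cost_of dP M N].

Definition ext_metric_on_iso_classes (R : realType) (k : fieldType)
  (d : Order.disp_t) (P : porderType d) (D : pmod k P -> pmod k P -> \bar R) : Prop :=
  [/\ (forall M M' N N', pmod_iso M M' -> pmod_iso N N' -> D M N = D M' N'),
      (forall M N, (0 <= D M N)%E),
      (forall M N, D M N = 0%E <-> pmod_iso M N),
      (forall M N, D M N = D N M) &
      (forall M N L, (D M L <= D M N + D N L)%E)].

From HB Require Import structures.
From mathcomp Require Import all_boot all_order all_algebra.
From mathcomp Require Import boolp classical_sets reals constructive_ereal ereal.
Set Implicit Arguments. Unset Strict Implicit. Unset Printing Implicit Defensive.
Import Order.TTheory GRing.Theory Num.Theory.
Local Open Scope ring_scope.
Local Open Scope order_scope.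

(* A coupling of cost 0 has f = h; its two Galois insertions then share their
   lower adjoint, hence their upper adjoint, so g = i and M ~ g^*G = i^*G ~ N.
   For the triangle inequality, a coupling (Q1, f1 -| g1, h1 -| i1, G1) of
   (M, N) and a coupling (Q2, f2 -| g2, h2 -| i2, G2) of (N, L) are glued along
   N: the new poset is the image of Q1 + Q2 in Q1 * Q2 under
   a |-> (a, g2 (h1 a)) and b |-> (i1 (f2 b), b), it carries G1 on the first
   summand and G2 on the second, and the maps between the two summands factor
   through i1^*G1 ~ N ~ g2^*G2.  Every glued point (a, b) satisfies
   h1 a = f2 b, so d(f1 a, h2 b) <= d(f1 a, h1 a) + d(f2 b, h2 b).  Costs
   range over finitely many values, so the infimum defining d_GT is attained. *)

Section GaloisInsertion.
Context (d dQ : Order.disp_t) (P : porderType d) (Q : porderType dQ)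
  (f : Q -> P) (g : P -> Q).

Lemma adjoint_galois_insertion :
  (forall u x, (f u <= x) <-> (u <= g x)) -> cancel g f -> galois_insertion f g.
Proof.
move=> adj gK; split=> // [u v uv | x y xy]; apply/adj; last by rewrite gK.
by apply: le_trans uv _; apply/adj.
Qed.

Hypothesis fg : galois_insertion f g.

Lemma gi_adjE u x : (f u <= x) = (u <= g x).
Proof. by case: fg => _ _ adj _; apply/idP/idP => /adj. Qed.

Lemma gi_upperK : cancel g f. Proof. by case: fg. Qed.

Lemma gi_unit u : u <= g (f u). Proof. by rewrite -gi_adjE. Qed.

Lemma gi_lower_homo : {homo f : u v / u <= v}. Proof. by case: fg. Qed.

Lemma gi_upper_homo : {homo g : x y / x <= y}. Proof. by case: fg. Qed.

End GaloisInsertion.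

Lemma gi_upper_unique (d dQ : Order.disp_t) (P : porderType d) (Q : porderType dQ)
  (f f' : Q -> P) (g g' : P -> Q) :
  f =1 f' -> galois_insertion f g -> galois_insertion f' g' -> g =1 g'.
Proof.
move=> ff' fg fg' x; apply/le_anti/andP; split.
  by rewrite -(gi_adjE fg') -ff' (gi_upperK fg).
by rewrite -(gi_adjE fg) ff' (gi_upperK fg').
Qed.

Lemma commuting_square_inv (k : fieldType) m n m' n'
  (phx : 'M[k]_(m, n)) (psx : 'M_(n, m)) (phy : 'M_(m', n')) (psy : 'M_(n', m'))
  (fA : 'M_(m, m')) (fB : 'M_(n, n')) :
  psx *m phx = 1%:M -> phy *m psy = 1%:M -> fA *m phy = phx *m fB ->
  fB *m psy = psx *m fA.
Proof.
move=> psxK phyK sq.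
by rewrite -[fB]mul1mx -psxK -(mulmxA psx) -sq -!mulmxA phyK mulmx1.
Qed.

Section DiagIso.
Context (k : fieldType) (d : Order.disp_t) (Q : porderType d).
Implicit Types (dA dB dC : Q -> nat).

Lemma diag_iso_refl dA (fA : forall x y, 'M[k]_(dA x, dA y)) : diag_iso fA fA.
Proof.
by exists (fun=> 1%:M), (fun=> 1%:M); split=> [x|x|x y _]; rewrite ?mul1mx ?mulmx1.
Qed.

Lemma diag_iso_sym dA dB (fA : forall x y, 'M[k]_(dA x, dA y))
  (fB : forall x y, 'M[k]_(dB x, dB y)) :
  diag_iso fA fB -> diag_iso fB fA.
Proof.
move=> [phi [psi [phiK psiK phiN]]]; exists psi, phi; split=> // x y xy.
exact: commuting_square_inv (psiK x) (phiK y) (phiN x y xy).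
Qed.

Lemma diag_iso_trans dA dB dC (fA : forall x y, 'M[k]_(dA x, dA y))
  (fB : forall x y, 'M[k]_(dB x, dB y)) (fC : forall x y, 'M[k]_(dC x, dC y)) :
  diag_iso fA fB -> diag_iso fB fC -> diag_iso fA fC.
Proof.
move=> [phi [psi [phiK psiK phiN]]] [phi' [psi' [phiK' psiK' phiN']]].
exists (fun x => phi x *m phi' x), (fun x => psi' x *m psi x).
split=> [x|x|x y xy].
- by rewrite mulmxA -(mulmxA (phi x)) phiK' mulmx1 phiK.
- by rewrite mulmxA -(mulmxA (psi' x)) psiK mulmx1 psiK'.
- by rewrite mulmxA phiN // -mulmxA phiN' // mulmxA.
Qed.

End DiagIso.

Definition cross_map (k : fieldType) (d d1 d2 : Order.disp_t) (P : porderType d)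
  (Q1 : porderType d1) (Q2 : porderType d2) (G1 : pmod k Q1) (G2 : pmod k Q2)
  (alpha : Q1 -> P) (beta1 : P -> Q1) (beta2 : P -> Q2)
  (phi : forall y, 'M[k]_(pdim G1 (beta1 y), pdim G2 (beta2 y))) a b :
  'M[k]_(pdim G1 a, pdim G2 b) :=
  pmap G1 a (beta1 (alpha a)) *m phi (alpha a) *m pmap G2 (beta2 (alpha a)) b.

Section CrossMap.
Context (k : fieldType) (d d1 d2 : Order.disp_t) (P : porderType d)
  (Q1 : porderType d1) (Q2 : porderType d2).
Variables (alpha1 : Q1 -> P) (beta1 : P -> Q1) (alpha2 : Q2 -> P) (beta2 : P -> Q2).
Hypotheses (gi1 : galois_insertion alpha1 beta1) (gi2 : galois_insertion alpha2 beta2).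
Variables (G1 : pmod k Q1) (G2 : pmod k Q2).
Variables (phi : forall y, 'M[k]_(pdim G1 (beta1 y), pdim G2 (beta2 y)))
  (psi : forall y, 'M[k]_(pdim G2 (beta2 y), pdim G1 (beta1 y))).
Hypotheses (phiK : forall y, phi y *m psi y = 1%:M)
  (phiN : forall y y', y <= y' ->
     pmap G1 (beta1 y) (beta1 y') *m phi y' = phi y *m pmap G2 (beta2 y) (beta2 y')).

Local Notation X := (cross_map alpha1 phi).
Local Notation X' := (cross_map alpha2 psi).

Lemma cross_mapl a a' b : a' <= a -> beta2 (alpha1 a) <= b ->
  pmap G1 a' a *m X a b = X a' b.
Proof.
move=> a'a ab; have y'y := gi_lower_homo gi1 a'a.
have a'b : beta2 (alpha1 a') <= b by apply: le_trans (gi_upper_homo gi2 y'y) ab.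
rewrite /cross_map !mulmxA -(pmap_comp G1 a'a (gi_unit gi1 a)).
rewrite (pmap_comp G1 (gi_unit gi1 a') (gi_upper_homo gi1 y'y)).
rewrite -(mulmxA _ _ (phi _)) phiN //.
by rewrite !mulmxA -!mulmxA -(pmap_comp G2 (gi_upper_homo gi2 y'y) ab).
Qed.

Lemma cross_mapr a b b' : b <= b' -> beta2 (alpha1 a) <= b ->
  X a b *m pmap G2 b b' = X a b'.
Proof. by move=> bb' ab; rewrite /cross_map -mulmxA -(pmap_comp G2 ab bb'). Qed.

Lemma cross_mapK a b a' : beta2 (alpha1 a) <= b -> beta1 (alpha2 b) <= a' ->
  X a b *m X' b a' = pmap G1 a a'.
Proof.
move=> ab ba'; set y := alpha1 a; set z := alpha2 b.
have yz : y <= z by rewrite -[y](gi_upperK gi2); apply: (gi_lower_homo gi2).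
have ay : a <= beta1 y := gi_unit gi1 a.
have yz' : beta1 y <= beta1 z := gi_upper_homo gi1 yz.
rewrite /cross_map !mulmxA -(mulmxA _ (pmap G2 _ b)) -(pmap_comp G2 ab (gi_unit gi2 b)).
rewrite -(mulmxA _ (phi y)) -phiN // !mulmxA -(mulmxA _ (phi z)) phiK mulmx1.
by rewrite -!pmap_comp // (le_trans ay yz').
Qed.

End CrossMap.

Section Gluing.
Context (k : fieldType) (d d1 d2 : Order.disp_t) (P : porderType d)
  (Q1 : finPOrderType d1) (Q2 : finPOrderType d2).
Variables (h1 : Q1 -> P) (i1 : P -> Q1) (f2 : Q2 -> P) (g2 : P -> Q2).
Hypotheses (hi1 : galois_insertion h1 i1) (fg2 : galois_insertion f2 g2).
Variables (G1 : pmod k Q1) (G2 : pmod k Q2).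
Variables (phi : forall y, 'M[k]_(pdim G1 (i1 y), pdim G2 (g2 y)))
  (psi : forall y, 'M[k]_(pdim G2 (g2 y), pdim G1 (i1 y))).
Hypotheses (phiK : forall y, phi y *m psi y = 1%:M)
  (psiK : forall y, psi y *m phi y = 1%:M)
  (phiN : forall y y', y <= y' ->
     pmap G1 (i1 y) (i1 y') *m phi y' = phi y *m pmap G2 (g2 y) (g2 y')).

Lemma psiN y y' : y <= y' ->
  pmap G2 (g2 y) (g2 y') *m psi y' = psi y *m pmap G1 (i1 y) (i1 y').
Proof. by move=> yy'; apply: commuting_square_inv (psiK y) (phiK y') (phiN yy'). Qed.

Definition glued_pair (u : Q1 + Q2) : Q1 *p Q2 :=
  match u with inl a => (a, g2 (h1 a)) | inr b => (i1 (f2 b), b) end.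

Definition glued_le u v := glued_pair u <= glued_pair v.

Definition glued_dim u :=
  match u with inl a => pdim G1 a | inr b => pdim G2 b end.

Definition glued_map u v : 'M[k]_(glued_dim u, glued_dim v) :=
  match u, v with
  | inl a, inl a' => pmap G1 a a'
  | inl a, inr b => cross_map h1 phi a b
  | inr b, inl a => cross_map f2 psi b a
  | inr b, inr b' => pmap G2 b b'
  end.

Lemma glued_map_id u : glued_map u u = 1%:M.
Proof. by case: u => /= ?; rewrite pmap_id. Qed.

Lemma glued_map_comp u v w : glued_le u v -> glued_le v w ->
  glued_map u w = glued_map u v *m glued_map v w.
Proof.
rewrite /glued_le !leEprod.
case: u => [a|b]; case: v => [a'|b']; case: w => [a''|b''] /=
  => /andP[le1 le2] /andP[le1' le2'].
- exact: pmap_comp.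
- by rewrite (cross_mapl hi1 fg2 phiN).
- by rewrite (cross_mapK hi1 fg2 phiK phiN).
- by rewrite cross_mapr.
- by rewrite cross_mapr.
- by rewrite (cross_mapK fg2 hi1 psiK psiN).
- by rewrite (cross_mapl fg2 hi1 psiN).
- exact: pmap_comp.
Qed.

Lemma glued_iso (j j' : P -> Q1 + Q2) :
  (forall x, glued_pair (j x) = glued_pair (j' x)) ->
  {homo j : x y / x <= y >-> glued_le x y} ->
  @diag_iso k d P (fun x => glued_dim (j x)) (fun x y => glued_map (j x) (j y))
     (fun x => glued_dim (j' x)) (fun x y => glued_map (j' x) (j' y)).
Proof.
move=> jj' jhomo; have jle x : glued_le (j x) (j' x) by rewrite /glued_le jj'.
have j'le x : glued_le (j' x) (j x) by rewrite /glued_le jj'.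
exists (fun x => glued_map (j x) (j' x)), (fun x => glued_map (j' x) (j x)).
split=> [x|x|x y xy].
- by rewrite -glued_map_comp ?glued_map_id.
- by rewrite -glued_map_comp ?glued_map_id.
have jxj'y : glued_le (j x) (j' y) by apply: le_trans (jhomo _ _ xy) (jle y).
rewrite -glued_map_comp ?jhomo // -glued_map_comp //.
exact: le_trans (j'le x) jxj'y.
Qed.

Record glued := Glued { glued_val : Q1 *p Q2; _ : glued_val \in codom glued_pair }.
HB.instance Definition _ := [isSub for glued_val].
HB.instance Definition _ := [Finite of glued by <:].
HB.instance Definition _ :=
  [SubChoice_isSubPOrder of glued by <: with Order.prod_display d1 d2].

Definition glued_of u : glued := Glued (codom_f glued_pair u).

(* [glued_le] is only a preorder; a point of the quotient [glued] is
   represented by whichever preimage [iinv] picks, which [glued_iso] makes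
   harmless. *)
Definition glued_rep (p : glued) : Q1 + Q2 := iinv (valP p).

Lemma glued_repK p : glued_pair (glued_rep p) = val p.
Proof. exact: f_iinv. Qed.

Lemma glued_le_rep p q : (p <= q) = glued_le (glued_rep p) (glued_rep q).
Proof. by rewrite leEsub /glued_le !glued_repK. Qed.

Lemma glued_compat (p : glued) : h1 (val p).1 = f2 (val p).2.
Proof.
rewrite -glued_repK; case: (glued_rep p) => /= [a|b].
  by rewrite (gi_upperK fg2).
by rewrite (gi_upperK hi1).
Qed.

Definition glued_pmod : pmod k glued :=
  @PMod k _ glued (fun p => glued_dim (glued_rep p))
    (fun p q => glued_map (glued_rep p) (glued_rep q))
    (fun p => glued_map_id (glued_rep p))
    (fun p q r pq qr => glued_map_comp (etrans (esym (glued_le_rep p q)) pq)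
                                        (etrans (esym (glued_le_rep q r)) qr)).

Lemma glued_pullback (j : P -> Q1 + Q2) (M : pmod k P) :
  {homo (fun x => glued_of (j x)) : x y / x <= y} ->
  @diag_iso k d P (fun x => glued_dim (j x)) (fun x y => glued_map (j x) (j y))
     (pdim M) (pmap M) ->
  pullback_iso (fun x => glued_of (j x)) glued_pmod M.
Proof.
move=> jhomo; apply: diag_iso_trans; apply: glued_iso => [x|x y xy].
  by rewrite glued_repK.
by rewrite -glued_le_rep jhomo.
Qed.

Lemma glued_insertion_l (f1 : Q1 -> P) (g1 : P -> Q1) : galois_insertion f1 g1 ->
  galois_insertion (fun p : glued => f1 (val p).1) (fun x => glued_of (inl (g1 x))).
Proof.
move=> fg1; apply: adjoint_galois_insertion => [p x|x]; last exact: (gi_upperK fg1).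
rewrite leEsub leEprod /= (gi_adjE fg1); split=> [pg1|/andP[] //].
rewrite pg1 /=; apply: le_trans (gi_unit fg2 _) _.
by rewrite -glued_compat; apply/(gi_upper_homo fg2)/(gi_lower_homo hi1).
Qed.

Lemma glued_insertion_r (h2 : Q2 -> P) (i2 : P -> Q2) : galois_insertion h2 i2 ->
  galois_insertion (fun p : glued => h2 (val p).2) (fun x => glued_of (inr (i2 x))).
Proof.
move=> hi2; apply: adjoint_galois_insertion => [p x|x]; last exact: (gi_upperK hi2).
rewrite leEsub leEprod /= (gi_adjE hi2); split=> [pi2|/andP[] //].
rewrite pi2 andbT; apply: le_trans (gi_unit hi1 _) _.
by rewrite glued_compat; apply/(gi_upper_homo hi1)/(gi_lower_homo fg2).
Qed.

End Gluing.

Lemma finite_range_min (T : finType) (d : Order.disp_t) (R : orderType d)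
  (F : T -> R) (S : set R) :
  (S `<=` range F)%classic -> (S !=set0)%classic ->
  exists2 c, S c & forall c', S c' -> c <= c'.
Proof.
move=> SF [_ /[dup] /SF[t0 _ <-] St0].
have [t /asboolP St tmin] := @arg_minP _ _ _ t0 (fun t => `[< S (F t) >]) F (asboolT St0).
exists (F t) => // _ /[dup] /SF[t' _ <-] St'; exact/tmin/asboolP.
Qed.

Section Metric.
Context (R : realType) (T : Type) (dist : T -> T -> R) (hdist : is_metric dist).

Lemma metric_ge0 x y : 0 <= dist x y. Proof. by case: hdist. Qed.
Lemma metric_eq0 x y : dist x y = 0 <-> x = y. Proof. by case: hdist. Qed.
Lemma metricC x y : dist x y = dist y x. Proof. by case: hdist. Qed.
Lemma metric_triangle x y z : dist x z <= dist x y + dist y z.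
Proof. by case: hdist. Qed.

End Metric.

Section CouplingCost.
Context (R : realType) (d dQ : Order.disp_t) (P : porderType d) (Q : finPOrderType dQ)
  (dP : P -> P -> R).
Implicit Types f h : Q -> P.

Lemma coupling_cost_ge0 f h : 0 <= coupling_cost dP f h.
Proof. exact: bigmax_ge_id. Qed.

Lemma le_coupling_cost f h q : dP (f q) (h q) <= coupling_cost dP f h.
Proof. exact: le_bigmax. Qed.

Lemma coupling_cost_range f h :
  range (oapp (fun xy : P * P => dP xy.1 xy.2) 0) (coupling_cost dP f h).
Proof.
rewrite /coupling_cost; elim/big_ind: _ => [|x y [ox _ <-] [oy _ <-]|q _].
- by exists None.
- by rewrite maxElt; case: ifP => _; [exists oy | exists ox].
- by exists (Some (f q, h q)).
Qed.

End CouplingCost.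

Section Couplings.
Context (R : realType) (k : fieldType) (d : Order.disp_t) (P : finPOrderType d)
  (dP : P -> P -> R).
Hypothesis hdP : is_metric dP.
Implicit Types M N L : pmod k P.

Lemma coupling_cost_of_ge0 M N c : coupling_cost_of dP M N c -> 0 <= c.
Proof. by case=> ? [? [? [? [? [? [? [_ _ _ _ ->]]]]]]]; apply: coupling_cost_ge0. Qed.

Lemma coupling_cost_of_range M N :
  (coupling_cost_of dP M N `<=` range (oapp (fun xy : P * P => dP xy.1 xy.2) 0))%classic.
Proof.
by move=> c [? [? [? [? [? [? [? [_ _ _ _ ->]]]]]]]]; apply: coupling_cost_range.
Qed.

Lemma coupling_cost_of_refl M : coupling_cost_of dP M M 0.
Proof.
have id_gi : galois_insertion (@id P) id by apply: adjoint_galois_insertion.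
exists d, P, id, id, id, id, M.
split; [exact: id_gi | exact: id_gi | exact: diag_iso_refl | exact: diag_iso_refl |].
apply/esym/le_anti; rewrite coupling_cost_ge0 andbT.
by apply: bigmax_le => // x _; rewrite (metric_eq0 hdP _ _).2.
Qed.

Lemma coupling_cost_of_sym M N c :
  coupling_cost_of dP M N c -> coupling_cost_of dP N M c.
Proof.
case=> dQ [Q [f [g [h [i [G [fg hi gM iN ->]]]]]]].
exists dQ, Q, h, i, f, g, G; split=> //.
by apply: eq_bigr => q _; rewrite metricC.
Qed.

Lemma coupling_cost_of_iso M M' N N' c : pmod_iso M M' -> pmod_iso N N' ->
  coupling_cost_of dP M N c -> coupling_cost_of dP M' N' c.
Proof.
move=> MM' NN'; case=> dQ [Q [f [g [h [i [G [fg hi gM iN ->]]]]]]].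
by exists dQ, Q, f, g, h, i, G; split=> //; apply: diag_iso_trans; eassumption.
Qed.

Lemma coupling_cost_of0_iso M N : coupling_cost_of dP M N 0 -> pmod_iso M N.
Proof.
case=> dQ [Q [f [g [h [i [G [fg hi gM iN cost0]]]]]]].
have fh q : f q = h q.
  apply/(metric_eq0 hdP)/le_anti.
  by rewrite metric_ge0 // andbT cost0 le_coupling_cost.
rewrite -(funext (gi_upper_unique fh fg hi)) in iN.
exact: diag_iso_trans (diag_iso_sym gM) iN.
Qed.

Lemma coupling_cost_of_trans M N L c1 c2 :
  coupling_cost_of dP M N c1 -> coupling_cost_of dP N L c2 ->
  exists2 c, coupling_cost_of dP M L c & c <= c1 + c2.
Proof.
case=> dQ1 [Q1 [f1 [g1 [h1 [i1 [G1 [fg1 hi1 gM iN ->]]]]]]].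
case=> dQ2 [Q2 [f2 [g2 [h2 [i2 [G2 [fg2 hi2 gN iL ->]]]]]]].
have [phi [psi [phiK psiK phiN]]] := diag_iso_trans iN (diag_iso_sym gN).
pose G := glued_pmod hi1 fg2 phiK psiK phiN.
have gi_l := glued_insertion_l hi1 fg2 fg1.
have gi_r := glued_insertion_r hi1 fg2 hi2.
eexists.
  eexists _, _, _, _, _, _, G; split; [exact: gi_l | exact: gi_r | | | done].
  - exact: glued_pullback (gi_upper_homo gi_l) gM.
  - exact: glued_pullback (gi_upper_homo gi_r) iL.
apply: bigmax_le => [|p _]; first by rewrite addr_ge0 ?coupling_cost_ge0.
apply: le_trans (metric_triangle hdP _ (h1 (val p).1) _) _.
apply: lerD; first exact: le_coupling_cost.
by rewrite (glued_compat hi1 fg2); apply: le_coupling_cost.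
Qed.

End Couplings.

Section GaloisTransportDistance.
Context (R : realType) (k : fieldType) (d : Order.disp_t) (P : finPOrderType d)
  (dP : P -> P -> R).
Hypothesis hdP : is_metric dP.
Implicit Types M N L : pmod k P.

Variant dGT_spec M N : \bar R -> Prop :=
  | DGTNone of (forall c, ~ coupling_cost_of dP M N c) : dGT_spec M N +oo%E
  | DGTMin c of coupling_cost_of dP M N c
      & (forall c', coupling_cost_of dP M N c' -> c <= c') : dGT_spec M N c%:E.

Lemma dGTP M N : dGT_spec M N (dGT dP M N).
Proof.
have [[c0 Sc0]|none] := pselect (exists c, coupling_cost_of dP M N c); last first.
  suff -> : dGT dP M N = +oo%E by constructor=> c Sc; apply: none; exists c.
  by apply/ereal_inf_pinfty => x [c Sc _]; exfalso; apply: none; exists c.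
have [c Sc cmin] :=
  finite_range_min (coupling_cost_of_range (dP:=dP) (M:=M) (N:=N)) (ex_intro _ c0 Sc0).
suff -> : dGT dP M N = c%:E by constructor.
apply/le_anti/andP; split; first by apply: ereal_inf_lbound; exists c.
by apply: le_ereal_inf_tmp => _ [c' Sc' <-]; rewrite lee_fin cmin.
Qed.

Lemma dGT_ge0 M N : (0 <= dGT dP M N)%E.
Proof.
by case: dGTP => [_|c Sc _]; rewrite ?leey // lee_fin (coupling_cost_of_ge0 Sc).
Qed.

Lemma dGT_eq0 M N : dGT dP M N = 0%E <-> pmod_iso M N.
Proof.
have iso_cost0 : pmod_iso M N -> coupling_cost_of dP M N 0.
  move=> MN; apply: coupling_cost_of_iso MN (coupling_cost_of_refl hdP M).
  exact: diag_iso_refl.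
case: dGTP => [none|c Sc cmin]; split.
- by [].
- by move=> MN; case: (none 0 (iso_cost0 MN)).
- by case=> c0; apply: (coupling_cost_of0_iso hdP); rewrite -c0.
- move=> MN; congr _%:E; apply/le_anti/andP.
  by split; [exact: cmin (iso_cost0 MN) | exact: coupling_cost_of_ge0 Sc].
Qed.

Lemma eq_dGT M M' N N' :
  pmod_iso M M' -> pmod_iso N N' -> dGT dP M N = dGT dP M' N'.
Proof.
move=> MM' NN'.
rewrite /dGT (_ : coupling_cost_of dP M N = coupling_cost_of dP M' N') //.
apply/funext => c; apply/propext; split; apply: coupling_cost_of_iso => //.
  exact: diag_iso_sym.
exact: diag_iso_sym.
Qed.

Lemma dGTC M N : dGT dP M N = dGT dP N M.
Proof.
rewrite /dGT (_ : coupling_cost_of dP M N = coupling_cost_of dP N M) //.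
by apply/funext => c; apply/propext; split; apply: coupling_cost_of_sym.
Qed.

Lemma dGT_triangle M N L : (dGT dP M L <= dGT dP M N + dGT dP N L)%E.
Proof.
case: (dGTP M N) => [_|c1 S1 _]; case: (dGTP N L) => [_|c2 S2 _];
  rewrite ?addye ?addey ?leey //.
have [c S cle] := coupling_cost_of_trans hdP S1 S2.
case: dGTP => [none|c' _ cmin]; first by case: (none c).
by rewrite -EFinD lee_fin (le_trans (cmin _ S)).
Qed.

End GaloisTransportDistance.

Theorem corollary3p7 (R : realType) (k : fieldType) (d : Order.disp_t)
  (P : finPOrderType d) (dP : P -> P -> R) (hdP : is_metric dP) :
  (forall M N : pmod k P, dGT dP M N = 0%E -> pmod_iso M N) /\
  ext_metric_on_iso_classes (dGT (k:=k) dP).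
Proof.
split=> [M N /(dGT_eq0 hdP) //|].
split; [exact: eq_dGT | exact: dGT_ge0 | exact: dGT_eq0 | exact: dGTC |].
exact: dGT_triangle.
Qed.
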